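(* If the Cartesian product $\prod_{\alpha\in\Lambda}X_\alpha$ (with the product topology) is locally Menger, then $X_\alpha$ is Menger for all but finitely many $\alpha\in\Lambda$.
   Context: A space $X$ is Menger if for each sequence $(\mathcal{U}_n)$ of open covers of $X$ there is a sequence $(\mathcal{V}_n)$ with each $\mathcal{V}_n$ a finite subset of $\mathcal{U}_n$ and $\bigcup_{n}\bigcup\mathcal{V}_n=X$. A space $X$ is locally Menger if for each $x\in X$ there exist an open set $U$ and a Menger subspace $Y$ of $X$ with $x\in U\subseteq Y$. *)

From HB Require Import structures.
From mathcomp Require Import all_boot all_order all_algebra.
From mathcomp Require Import all_classical all_reals all_analysis.
Set Implicit Arguments. Unset Strict Implicit. Unset Printing Implicit Defensive.
Local Open Scope classical_set_scope.

(* Y (a subset of the space T, with the subspace topology) is Menger: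
   an open cover of the subspace Y is represented by a family of open sets
   of T whose union contains Y (every open set of the subspace is the trace
   on Y of an open set of T). *)
Definition menger_set {T : topologicalType} (Y : set T) : Prop :=
  forall U : nat -> set (set T),
    (forall n, (forall A, U n A -> open A) /\ Y `<=` \bigcup_(A in U n) A) ->
    exists V : nat -> set (set T),
      (forall n, finite_set (V n) /\ V n `<=` U n) /\
      Y `<=` \bigcup_n \bigcup_(A in V n) A.

Definition menger (T : topologicalType) : Prop := menger_set [set: T].

Definition locally_menger (T : topologicalType) : Prop :=
  forall x : T, exists (U : set T) (Y : set T),
    open U /\ U x /\ U `<=` Y /\ menger_set Y.

From mathcomp Require Import finmap.
From mathcomp Require Import all_boot all_order all_algebra.
From mathcomp Require Import all_classical all_reals all_analysis.
Local Open Scope classical_set_scope.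

(* A Menger set Y around a point x of the product contains a basic open
   set, which constrains only the coordinates in a finite set F.  For a outside
   F, changing the a-th coordinate of x arbitrarily stays in that basic set, so
   the projection onto X a maps Y onto X a.  Continuous images of Menger sets
   are Menger. *)

Lemma finite_subset_image (aT rT : Type) (f : aT -> rT) (A : set aT) (B : set rT) :
  finite_set B -> B `<=` f @` A ->
  exists C, [/\ finite_set C, C `<=` A & B `<=` f @` C].
Proof.
move=> finB BfA.
have [[a0 _]|A0] := pselect (A !=set0); last first.
  exists set0; split=> // b /BfA [a Aa _].
  by exfalso; apply: A0; exists a.
have /choice [g gP] : forall b, exists a, B b -> A a /\ f a = b.
  move=> b; have [/BfA [a Aa fab]|nBb] := pselect (B b).
    by exists a.
  by exists a0 => /nBb.
exists (g @` B); split; first exact: finite_image.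
  by move=> _ [b /gP [Agb _] <-].
by move=> b Bb; exists (g b); [exists b | exact: (gP b Bb).2].
Qed.

Lemma menger_set_image (T S : topologicalType) (f : T -> S) (Y : set T) :
  continuous f -> menger_set Y -> menger_set (f @` Y).
Proof.
move=> cf mY U oU.
case: (mY (fun n => preimage f @` U n)) => [n|V' [V'U coverV']].
  split.
    move=> _ [A UA <-]; apply: open_comp; last exact: (oU n).1.
    by move=> x _; exact: cf.
  move=> y Yy; have [A UA Afy] := (oU n).2 (f y) (ex_intro2 _ _ y Yy erefl).
  by exists (f @^-1` A) => //; exists A.
have /choice [V VP] : forall n, exists V,
    [/\ finite_set V, V `<=` U n & V' n `<=` preimage f @` V].
  by move=> n; have [finV' V'Un] := V'U n; exact: finite_subset_image.
exists V; split; first by move=> n; have [] := VP n.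
move=> _ [y Yy <-]; have [n _ [B V'B By]] := coverV' y Yy.
have [_ _ /(_ B V'B) [A VA eB]] := VP n.
by exists n => //; exists A => //; rewrite /= -eB in By.
Qed.

Definition cylinder {I : Type} {K : I -> topologicalType} (x : prod_topology K)
    (F : set I) : set (prod_topology K) :=
  [set f | forall i, F i -> f i = x i].

Lemma nbhs_prod_cylinder (I : Type) (K : I -> topologicalType)
    (x : prod_topology K) (U : set (prod_topology K)) :
  nbhs x U -> exists2 F : set I, finite_set F & cylinder x F `<=` U.
Proof.
move=> [] P [] [] Q QfinP <- [] V QV Vx VU.
have [L Lsub VL] := QfinP _ QV.
(* V is the intersection of the finitely many subbasic sets M in L, each of
   the form proj w @^-1` N; R pairs each M with such a coordinate w. *)
pose R := [set wM : I * set (prod_topology K) | exists2 N : set (K wM.1),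
  open N & wM.2 = (fun f : prod_topology K => f wM.1) @^-1` N].
have [C [finC CR LC]] :
    exists C, [/\ finite_set C, C `<=` R & [set` L] `<=` snd @` C].
  apply: finite_subset_image; first exact: finite_fset.
  move=> M /Lsub /set_mem [w _ [N oN NM]].
  by exists (w, M) => //; exists N.
exists (fst @` C); first exact: finite_image.
move=> f fx; apply: VU; exists V => //; change (V f); rewrite -VL => M LM.
have [[w M'] Cw /= eM] := LC M LM; subst M'.
have [N _ /= eM] := CR _ Cw.
have := Vx; rewrite -VL => /(_ M LM); rewrite eM /= fx //.
by exists (w, M).
Qed.

Lemma proj_cylinder (I : eqType) (K : I -> topologicalType)
    (x : prod_topology K) (F : set I) (a : I) :
  ~ F a -> proj a @` cylinder x F = [set: K a].
Proof.
move=> Fa; apply/seteqP; split=> // y _; exists (dfwith x a y); last exact: projK.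
by move=> i Fi; rewrite dfwithout //; apply/eqP => ia; apply: Fa; rewrite ia.
Qed.

Theorem proposition4p4 (Lambda : Type) (X : Lambda -> topologicalType)
  (hne : forall a, [set: X a] !=set0) :
  locally_menger (prod_topology X) ->
  finite_set [set a : Lambda | ~ menger (X a)].
Proof.
move=> LM.
pose x : prod_topology X := fun a => projT1 (cid (hne a)).
have [U [Y [oU [Ux [UY mY]]]]] := LM x.
have /nbhs_prod_cylinder [F finF FU] : nbhs x U by exact: open_nbhs_nbhs.
apply: sub_finite_set finF => a nMa; apply: contrapT => Fa; apply: nMa.
have projYT : proj a @` Y = [set: X a].
  apply/seteqP; split=> //.
  rewrite -(@proj_cylinder {classic Lambda} X x F a Fa).
  by apply: image_subset; exact: subset_trans FU UY.
rewrite /menger -projYT.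
by apply: menger_set_image mY; exact: (@proj_continuous {classic Lambda} X a).
Qed.
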